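(* Let $a\neq0$, $b\in\mathbb{R}$, $c\neq0$, $A_1=(a,b,c)$, $A_2=(-ae^{c},-be^{-c},-c)$, $0<\alpha<\pi$, and put $S=\sqrt{(a^2+1)e^{2c}-2e^{c}+1}$. Let $\epsilon=-1$ if $a>0$ and $\epsilon=+1$ if $a<0$. If $$\cos\alpha>\frac{e^{c}}{S}\cdot\frac{2-4e^{c}+\epsilon aS+e^{2c}\big(2a^2+2+\epsilon aS\big)}{\sqrt{(a^2+1)e^{6c}+e^{2c}\big(a^2+3+4\epsilon aS\big)+e^{4c}\big(6a^2+3+4\epsilon aS\big)-2e^{c}-4e^{3c}-2e^{5c}+1}},$$ then the translation-like $\alpha$-isoptic surface of $\overline{A_1A_2}$ is infinite: it contains points with arbitrarily large $z$-coordinate.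
   Context: $\mathbf{Sol}$ is $\mathbb{R}^3$ with coordinates $(x,y,z)$, group law $(a,b,c)(x,y,z)=(x+ae^{-z},\,y+be^{z},\,z+c)$, and left-invariant metric $ds^2=e^{2z}dx^2+e^{-2z}dy^2+dz^2$. The translation curve starting at the origin with initial unit vector $(u,v,w)$ is $t\mapsto\big(-\tfrac{u}{w}(e^{-wt}-1),\tfrac{v}{w}(e^{wt}-1),wt\big)$ if $w\neq0$ and $t\mapsto(ut,vt,0)$ if $w=0$. For $P=(p_1,p_2,p_3)$ let $T_P(X,Y,Z)=(p_1+Xe^{-p_3},\,p_2+Ye^{p_3},\,p_3+Z)$; the translation curve from $P$ to $Q$ is the $T_P$-image of the translation curve from the origin to $T_P^{-1}(Q)$. The translation-like $\alpha$-isoptic surface of the translation-like segment $\overline{A_1A_2}$ is the set of points $P\notin\{A_1,A_2\}$ such that the angle at $P$, measured with the metric at $P$, between the initial tangent vectors of the translation curves from $P$ to $A_1$ and from $P$ to $A_2$ equals $\alpha$. Equivalently, $P=(x,y,z)$ lies on it iff $\cos\alpha=\dfrac{e^{z}(x+ae^{c})(x-a)+e^{-z}(y+be^{-c})(y-b)+4\sinh\frac{z+c}{2}\sinh\frac{z-c}{2}}{\sqrt{e^{z+c}(x-a)^2+e^{-(z+c)}(y-b)^2+4\sinh^2\frac{z-c}{2}}\sqrt{e^{z-c}(x+ae^{c})^2+e^{-(z-c)}(y+be^{-c})^2+4\sinh^2\frac{z+c}{2}}}$. *)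

From Stdlib Require Import Reals Lra.
Open Scope R_scope.

(* Points of Sol = R^3 with coordinates (x,y,z). *)
Definition pt := (R * R * R)%type.
Definition px (P : pt) : R := fst (fst P).
Definition py (P : pt) : R := snd (fst P).
Definition pz (P : pt) : R := snd P.

(* Translation curve starting at the origin with initial vector (u,v,w). *)
Definition tcurve (u v w t : R) : pt :=
  if Req_EM_T w 0 then (u * t, v * t, 0)
  else (- (u / w) * (exp (- (w * t)) - 1), (v / w) * (exp (w * t) - 1), w * t).

Definition TP (P Q : pt) : pt :=
  (px P + px Q * exp (- pz P), py P + py Q * exp (pz P), pz P + pz Q).

(* Differential of T_P (a linear map, independent of the base point):
   it sends the tangent vector (u,v,w) at the origin to
   (u e^{-p3}, v e^{p3}, w) at P.  The initial velocity of tcurve u v w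
   at t = 0 is (u,v,w), so the initial tangent vector at P of the
   translation curve  T_P o tcurve u v w  is  dTP P (u,v,w). *)
Definition dTP (P : pt) (d : pt) : pt :=
  (px d * exp (- pz P), py d * exp (pz P), pz d).

Definition gP (P : pt) (xi eta : pt) : R :=
  exp (2 * pz P) * px xi * px eta + exp (- (2 * pz P)) * py xi * py eta
  + pz xi * pz eta.

Definition angleP (P : pt) (xi eta : pt) : R :=
  acos (gP P xi eta / (sqrt (gP P xi xi) * sqrt (gP P eta eta))).

(* d = (u,v,w) is the initial unit vector (unit for the metric at the
   origin, which is Euclidean) of the translation curve from P to Q:
   T_P (tcurve u v w t) = Q for some parameter t > 0. *)
Definition tdir (P Q : pt) (d : pt) : Prop :=
  px d ^ 2 + py d ^ 2 + pz d ^ 2 = 1 /\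
  exists t : R, 0 < t /\ TP P (tcurve (px d) (py d) (pz d) t) = Q.

Definition isoptic (alpha : R) (A1 A2 : pt) (P : pt) : Prop :=
  P <> A1 /\ P <> A2 /\
  exists d1 d2 : pt, tdir P A1 d1 /\ tdir P A2 d2 /\
    angleP P (dTP P d1) (dTP P d2) = alpha.

(* Put s = e^-z.  Seen from a point P = (x, 0, z) above A1 and A2, both
   translation curves leave P downwards, and the cosine of the angle between
   them is an algebraic function of (x, s) that is continuous up to s = 0.  At
   s = 0 it equals 1 at x1 = a e^c / (e^c - 1), where the two limiting
   directions are parallel, and it equals the threshold of the hypothesis at
   x0 = (a e^c + eps S) / (e^c - 1), where the limiting cosine is minimal.  Hence
   for every large z the cosine takes values below and above cos alpha at x0
   and x1, and the intermediate value theorem in x gives a point of the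
   isoptic surface at height z. *)

From Stdlib Require Import Reals Lra.
From Coquelicot Require Import Coquelicot.
Open Scope R_scope.

Definition TPinv (P Q : pt) : pt :=
  ((px Q - px P) * exp (pz P), (py Q - py P) * exp (- pz P), pz Q - pz P).

Lemma TP_TPinv (P Q : pt) : TP P (TPinv P Q) = Q.
Proof.
  destruct P as [[p1 p2] p3], Q as [[q1 q2] q3]; unfold TP, TPinv, px, py, pz; simpl.
  rewrite !Rmult_assoc, <- !exp_plus, Rplus_opp_r, Rplus_opp_l, exp_0.
  f_equal; [f_equal|]; ring.
Qed.

(* For pz Q < 0, the translation curve from the origin to Q starts in the
   direction of -(tslope_x Q, tslope_y Q, 1) (see tcurve_down_dir). *)
Definition tslope_x (Q : pt) : R := px Q / (1 - exp (- pz Q)).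
Definition tslope_y (Q : pt) : R := py Q / (exp (pz Q) - 1).

Definition down_dir (u v : R) : pt :=
  let n := sqrt (u ^ 2 + v ^ 2 + 1) in (- u / n, - v / n, - 1 / n).

Lemma norm3_pos (u v : R) : 0 < sqrt (u ^ 2 + v ^ 2 + 1).
Proof. apply sqrt_lt_R0; nra. Qed.

Lemma norm3_sqr (u v : R) : sqrt (u ^ 2 + v ^ 2 + 1) ^ 2 = u ^ 2 + v ^ 2 + 1.
Proof. apply pow2_sqrt; nra. Qed.

Lemma down_dir_unit (u v : R) :
  let d := down_dir u v in px d ^ 2 + py d ^ 2 + pz d ^ 2 = 1.
Proof.
  unfold down_dir, px, py, pz; cbn [fst snd].
  pose proof (norm3_pos u v) as Hn; pose proof (norm3_sqr u v) as Hn2.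
  set (n := sqrt (u ^ 2 + v ^ 2 + 1)) in *.
  transitivity ((u ^ 2 + v ^ 2 + 1) / n ^ 2); [field; lra|].
  rewrite <- Hn2; field; lra.
Qed.

Lemma tcurve_down_dir (Q : pt) : pz Q < 0 ->
  let d := down_dir (tslope_x Q) (tslope_y Q) in
  exists t, 0 < t /\ tcurve (px d) (py d) (pz d) t = Q.
Proof.
  destruct Q as [[X Y] Z]; unfold tslope_x, tslope_y, down_dir, px, py, pz; cbn [fst snd].
  intros HZ.
  set (u := X / (1 - exp (- Z))); set (v := Y / (exp Z - 1)).
  pose proof (norm3_pos u v) as Hn; set (n := sqrt (u ^ 2 + v ^ 2 + 1)) in *.
  assert (Hlo : exp Z < 1) by (rewrite <- exp_0; apply exp_increasing; lra).
  assert (Hhi : 1 < exp (- Z)) by (rewrite <- exp_0; apply exp_increasing; lra).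
  exists (- Z * n); split; [nra|].
  unfold tcurve; destruct (Req_EM_T (-1 / n) 0) as [H0 | _].
  { exfalso; unfold Rdiv in H0; apply Rmult_integral in H0.
    destruct H0 as [H0 | H0]; [lra | apply (Rinv_neq_0_compat n); lra]. }
  replace (-1 / n * (- Z * n)) with Z by (field; lra).
  unfold u, v; f_equal; f_equal; field; lra.
Qed.

Lemma tdir_below (P Q : pt) : pz Q < pz P ->
  tdir P Q (down_dir (tslope_x (TPinv P Q)) (tslope_y (TPinv P Q))).
Proof.
  intros HQ; split; [apply down_dir_unit|].
  destruct (tcurve_down_dir (TPinv P Q)) as [t [Ht HT]];
    [unfold TPinv, pz in *; simpl; lra|].
  exists t; split; [exact Ht|]; rewrite HT; apply TP_TPinv.
Qed.

Lemma gP_dTP (P d d' : pt) :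
  gP P (dTP P d) (dTP P d') = px d * px d' + py d * py d' + pz d * pz d'.
Proof.
  unfold gP, dTP, px, py, pz; cbn [fst snd].
  replace (2 * snd P) with (snd P + snd P) by ring.
  rewrite !exp_Ropp, exp_plus.
  pose proof (exp_pos (snd P)); field; lra.
Qed.

Definition dir_cos (u1 v1 u2 v2 : R) : R :=
  (u1 * u2 + v1 * v2 + 1) / (sqrt (u1 ^ 2 + v1 ^ 2 + 1) * sqrt (u2 ^ 2 + v2 ^ 2 + 1)).

Lemma angleP_down_dir (P : pt) (u1 v1 u2 v2 : R) :
  angleP P (dTP P (down_dir u1 v1)) (dTP P (down_dir u2 v2)) = acos (dir_cos u1 v1 u2 v2).
Proof.
  assert (Hunit : forall u v, let d := down_dir u v in px d * px d + py d * py d + pz d * pz d = 1).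
  { intros u v d; rewrite <- (down_dir_unit u v); fold d; ring. }
  unfold angleP; rewrite !gP_dTP, !Hunit, sqrt_1; f_equal.
  unfold down_dir, dir_cos, px, py, pz; cbn [fst snd].
  pose proof (norm3_pos u1 v1); pose proof (norm3_pos u2 v2).
  field; lra.
Qed.

Lemma isoptic_below (alpha : R) (A1 A2 P : pt) :
  0 <= alpha <= PI -> pz A1 < pz P -> pz A2 < pz P ->
  dir_cos (tslope_x (TPinv P A1)) (tslope_y (TPinv P A1))
          (tslope_x (TPinv P A2)) (tslope_y (TPinv P A2)) = cos alpha ->
  isoptic alpha A1 A2 P.
Proof.
  intros Halpha H1 H2 Hcos.
  split; [intros ->; lra|]; split; [intros ->; lra|].
  eexists; eexists; split; [apply tdir_below, H1|]; split; [apply tdir_below, H2|].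
  rewrite angleP_down_dir, Hcos; apply acos_cos, Halpha.
Qed.

(* With s = exp (- z), view_cos a b c x s is the cosine of the angle under which
   A1 and A2 are seen from (x, 0, z) (see isoptic_view); unlike the angle, it is
   defined and continuous at s = 0, i.e. at z = +oo. *)
Definition view_cos (a b c x s : R) : R :=
  dir_cos ((x - a) * exp c / (1 - exp c * s)) (- (b * s) / (1 - exp c * s))
          ((a * exp c + x) / (exp c - s)) (b * s / (exp c - s)).

Lemma isoptic_view (a b c alpha x z : R) :
  0 <= alpha <= PI -> c < z -> - c < z ->
  view_cos a b c x (exp (- z)) = cos alpha ->
  isoptic alpha (a, b, c) (- a * exp c, - b * exp (- c), - c) (x, 0, z).
Proof.
  intros Halpha Hz1 Hz2 Hview.
  apply isoptic_below; [exact Halpha | unfold pz; simpl; lra | unfold pz; simpl; lra |].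
  rewrite <- Hview; unfold view_cos, tslope_x, tslope_y, TPinv, px, py, pz; cbn [fst snd].
  assert (HE : exp c < exp z) by (apply exp_increasing; lra).
  assert (HE' : 1 < exp c * exp z)
    by (rewrite <- exp_plus, <- exp_0; apply exp_increasing; lra).
  pose proof (exp_pos c); pose proof (exp_pos z).
  unfold Rminus; rewrite ?Ropp_plus_distr, ?Ropp_involutive, ?exp_plus, ?exp_Ropp.
  f_equal; field; lra.
Qed.

Lemma ex_derive_dir_cos (f1 g1 f2 g2 : R -> R) (t : R) :
  ex_derive f1 t -> ex_derive g1 t -> ex_derive f2 t -> ex_derive g2 t ->
  ex_derive (fun t => dir_cos (f1 t) (g1 t) (f2 t) (g2 t)) t.
Proof.
  intros; unfold dir_cos; auto_derive; repeat split; try assumption; try nra.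
  apply Rmult_integral_contrapositive_currified; apply Rgt_not_eq, sqrt_lt_R0; nra.
Qed.

Lemma continuous_view_cos_s (a b c x : R) : continuous (fun s => view_cos a b c x s) 0.
Proof.
  pose proof (exp_pos c).
  apply (ex_derive_continuous (K := R_AbsRing) (V := R_NormedModule)), ex_derive_dir_cos;
    auto_derive; lra.
Qed.

Lemma continuous_view_cos_x (a b c z x : R) : c < z -> - c < z ->
  continuous (fun x => view_cos a b c x (exp (- z))) x.
Proof.
  intros Hz1 Hz2.
  assert (Hs1 : exp c * exp (- z) < 1)
    by (rewrite <- exp_plus, <- exp_0; apply exp_increasing; lra).
  assert (Hs2 : exp (- z) < exp c) by (apply exp_increasing; lra).
  apply (ex_derive_continuous (K := R_AbsRing) (V := R_NormedModule)), ex_derive_dir_cos;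
    auto_derive; lra.
Qed.

Lemma view_cos_attains (a b c x0 x1 z y : R) : c < z -> - c < z ->
  view_cos a b c x0 (exp (- z)) < y < view_cos a b c x1 (exp (- z)) ->
  exists x, view_cos a b c x (exp (- z)) = y.
Proof.
  intros Hz1 Hz2 Hy.
  destruct (IVT_gen_consistent (fun x => view_cos a b c x (exp (- z))) x0 x1 y)
    as [x [_ Hx]]; [| | exists x; exact Hx].
  - intros x; apply continuous_view_cos_x; assumption.
  - pose proof (Rmin_l (view_cos a b c x0 (exp (- z))) (view_cos a b c x1 (exp (- z)))).
    pose proof (Rmax_r (view_cos a b c x0 (exp (- z))) (view_cos a b c x1 (exp (- z)))).
    cbv beta; lra.
Qed.

Lemma view_cos_at_0 (a b c x : R) :
  let p := (x - a) * exp c in let q := a + x / exp c in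
  view_cos a b c x 0 = (p * q + 1) / (sqrt (p ^ 2 + 1) * sqrt (q ^ 2 + 1)).
Proof.
  unfold view_cos, dir_cos; pose proof (exp_pos c).
  replace (- (b * 0) / (1 - exp c * 0)) with 0 by (field; lra).
  replace (b * 0 / (exp c - 0)) with 0 by (field; lra).
  replace ((x - a) * exp c / (1 - exp c * 0)) with ((x - a) * exp c) by (field; lra).
  replace ((a * exp c + x) / (exp c - 0)) with (a + x / exp c) by (field; lra).
  f_equal; [ring | f_equal; f_equal; ring].
Qed.

Lemma exp_neq_1 (c : R) : c <> 0 -> exp c <> 1.
Proof. intros Hc HE; apply Hc; rewrite <- (ln_exp c), HE; apply ln_1. Qed.

Lemma view_cos_0_parallel (a b c : R) : c <> 0 ->
  view_cos a b c (a * exp c / (exp c - 1)) 0 = 1.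
Proof.
  intros Hc; rewrite view_cos_at_0; cbv zeta.
  pose proof (exp_pos c); pose proof (exp_neq_1 c Hc).
  set (p := a * exp c / (exp c - 1)).
  replace ((p - a) * exp c) with p by (unfold p; field; lra).
  replace (a + p / exp c) with p by (unfold p; field; lra).
  rewrite <- sqrt_mult, sqrt_square by nra; field; nra.
Qed.

Lemma exp_mul_pow (n : nat) (c : R) : exp (INR n * c) = exp c ^ n.
Proof.
  induction n as [|n IHn]; [simpl; rewrite Rmult_0_l; apply exp_0|].
  rewrite S_INR, Rmult_plus_distr_r, Rmult_1_l, exp_plus, IHn; simpl; ring.
Qed.

Lemma threshold_norm_identity (a E T : R) : T ^ 2 = a ^ 2 * E ^ 2 + (E - 1) ^ 2 ->
  ((E - 1) ^ 2 + E ^ 2 * (a + T) ^ 2) * (E ^ 2 * (E - 1) ^ 2 + (a * E ^ 2 + T) ^ 2) =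
  (a ^ 2 * E ^ 2 + (E - 1) ^ 2) *
  ((a ^ 2 + 1) * E ^ 6 + E ^ 2 * (a ^ 2 + 3 + 4 * a * T) + E ^ 4 * (6 * a ^ 2 + 3 + 4 * a * T)
   - 2 * E - 4 * E ^ 3 - 2 * E ^ 5 + 1).
Proof.
  intros HT; apply Rminus_diag_uniq.
  replace (_ - _) with ((T ^ 2 - (a ^ 2 * E ^ 2 + (E - 1) ^ 2)) *
    (1 - 2 * E + 2 * E ^ 2 + E ^ 2 * T ^ 2 - 2 * E ^ 3 + 2 * E ^ 4 - 2 * E ^ 5 + E ^ 6
     + 2 * a * E ^ 2 * T + 2 * a * E ^ 4 * T + a ^ 2 * E ^ 2 + 5 * a ^ 2 * E ^ 4
     + a ^ 2 * E ^ 6)) by ring.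
  rewrite HT; ring.
Qed.

Lemma threshold_value (a E S T : R) : 0 < E -> E <> 1 -> 0 < S ->
  S ^ 2 = a ^ 2 * E ^ 2 + (E - 1) ^ 2 -> T ^ 2 = S ^ 2 ->
  let p := E * (a + T) / (E - 1) in let q := (a * E ^ 2 + T) / (E * (E - 1)) in
  (p * q + 1) / (sqrt (p ^ 2 + 1) * sqrt (q ^ 2 + 1)) =
  E / S * ((2 - 4 * E + a * T + E ^ 2 * (2 * a ^ 2 + 2 + a * T))
           / sqrt ((a ^ 2 + 1) * E ^ 6 + E ^ 2 * (a ^ 2 + 3 + 4 * a * T)
                   + E ^ 4 * (6 * a ^ 2 + 3 + 4 * a * T) - 2 * E - 4 * E ^ 3 - 2 * E ^ 5 + 1)).
Proof.
  intros HE HE1 HS0 HS HT p q.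
  assert (HE1' : 0 < (E - 1) ^ 2) by (destruct (Rlt_or_le E 1); nra).
  rewrite HS in HT.
  set (D := (a ^ 2 + 1) * E ^ 6 + E ^ 2 * (a ^ 2 + 3 + 4 * a * T)
            + E ^ 4 * (6 * a ^ 2 + 3 + 4 * a * T) - 2 * E - 4 * E ^ 3 - 2 * E ^ 5 + 1).
  pose proof (threshold_norm_identity a E T HT) as HSD; fold D in HSD; rewrite <- HS in HSD.
  assert (HD : 0 < D).
  { assert (0 < ((E - 1) ^ 2 + E ^ 2 * (a + T) ^ 2) * (E ^ 2 * (E - 1) ^ 2 + (a * E ^ 2 + T) ^ 2))
      by (pose proof (pow2_ge_0 (E * (a + T))); pose proof (pow2_ge_0 (a * E ^ 2 + T));
          pose proof (pow_lt E 2 HE); apply Rmult_lt_0_compat; nra).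
    rewrite HSD in H; apply (Rmult_lt_reg_l (S ^ 2)); [apply pow_lt|]; lra. }
  assert (Hden : sqrt (p ^ 2 + 1) * sqrt (q ^ 2 + 1) = S * sqrt D / (E * (E - 1) ^ 2)).
  { rewrite <- sqrt_mult by (apply Rplus_le_le_0_compat; [apply pow2_ge_0 | lra]).
    rewrite <- (sqrt_pow2 (S * sqrt D / (E * (E - 1) ^ 2)))
      by (apply Rlt_le, Rdiv_lt_0_compat; [apply Rmult_lt_0_compat, sqrt_lt_R0|]; nra).
    f_equal.
    replace ((S * sqrt D / (E * (E - 1) ^ 2)) ^ 2) with (S ^ 2 * sqrt D ^ 2 / (E ^ 2 * (E - 1) ^ 4))
      by (field; lra).
    rewrite pow2_sqrt, <- HSD by lra; unfold p, q; field; lra. }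
  assert (Hnum : p * q + 1 = (2 - 4 * E + a * T + E ^ 2 * (2 * a ^ 2 + 2 + a * T)) / (E - 1) ^ 2).
  { apply Rminus_diag_uniq.
    transitivity ((T ^ 2 - (a ^ 2 * E ^ 2 + (E - 1) ^ 2)) / (E - 1) ^ 2);
      [unfold p, q; field; lra | rewrite HT; field; lra]. }
  rewrite Hden, Hnum; pose proof (sqrt_lt_R0 D HD); field; lra.
Qed.

Lemma view_cos_threshold (a b c S eps : R) : c <> 0 ->
  S = sqrt ((a ^ 2 + 1) * exp (2 * c) - 2 * exp c + 1) -> eps ^ 2 = 1 ->
  view_cos a b c ((a * exp c + eps * S) / (exp c - 1)) 0 =
  exp c / S *
  ((2 - 4 * exp c + eps * a * S + exp (2 * c) * (2 * a ^ 2 + 2 + eps * a * S))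
   / sqrt ((a ^ 2 + 1) * exp (6 * c)
           + exp (2 * c) * (a ^ 2 + 3 + 4 * eps * a * S)
           + exp (4 * c) * (6 * a ^ 2 + 3 + 4 * eps * a * S)
           - 2 * exp c - 4 * exp (3 * c) - 2 * exp (5 * c) + 1)).
Proof.
  intros Hc HS Heps.
  assert (Hk : forall (k : R) (n : nat), k = INR n -> exp (k * c) = exp c ^ n)
    by (intros k n ->; apply exp_mul_pow).
  rewrite (Hk 2 2%nat), (Hk 3 3%nat), (Hk 4 4%nat), (Hk 5 5%nat), (Hk 6 6%nat) in *
    by (simpl; ring).
  rewrite view_cos_at_0; cbv zeta.
  pose proof (exp_pos c) as HE; pose proof (exp_neq_1 c Hc) as HE1.
  set (E := exp c) in *.
  assert (HK : 0 < a ^ 2 * E ^ 2 + (E - 1) ^ 2) by (destruct (Rlt_or_le E 1); nra).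
  replace ((a ^ 2 + 1) * E ^ 2 - 2 * E + 1) with (a ^ 2 * E ^ 2 + (E - 1) ^ 2) in HS by ring.
  assert (HS2 : S ^ 2 = a ^ 2 * E ^ 2 + (E - 1) ^ 2) by (rewrite HS; apply pow2_sqrt; lra).
  replace (eps * a * S) with (a * (eps * S)) by ring.
  replace (4 * eps * a * S) with (4 * a * (eps * S)) by ring.
  replace (((a * E + eps * S) / (E - 1) - a) * E) with (E * (a + eps * S) / (E - 1))
    by (field; lra).
  replace (a + (a * E + eps * S) / (E - 1) / E) with ((a * E ^ 2 + eps * S) / (E * (E - 1)))
    by (field; lra).
  apply threshold_value; [lra | lra | rewrite HS; apply sqrt_lt_R0, HK | exact HS2 |].
  rewrite Rpow_mult_distr, Heps; ring.
Qed.

Lemma filterlim_exp_opp_p_infty :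
  filterlim (fun z => exp (- z)) (Rbar_locally p_infty) (locally 0).
Proof.
  apply (is_lim_comp exp (fun z => - z) p_infty 0 m_infty).
  - exact is_lim_exp_m.
  - apply (is_lim_opp (fun z => z) p_infty p_infty), is_lim_id.
  - exists 0; intros; discriminate.
Qed.

Lemma view_cos_p_infty (a b c x : R) :
  filterlim (fun z => view_cos a b c x (exp (- z))) (Rbar_locally p_infty)
    (locally (view_cos a b c x 0)).
Proof.
  eapply filterlim_comp; [apply filterlim_exp_opp_p_infty | apply continuous_view_cos_s].
Qed.

Lemma filterlim_open {T : Type} {F : (T -> Prop) -> Prop} (f : T -> R) (l : R)
  (D : R -> Prop) :
  filterlim f F (locally l) -> open D -> D l -> F (fun t => D (f t)).
Proof. intros Hf HD Hl; apply Hf, HD, Hl. Qed.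

Theorem lemma4p3 (a b c alpha : R) :
  a <> 0 -> c <> 0 -> 0 < alpha < PI ->
  let A1 : pt := (a, b, c) in
  let A2 : pt := (- a * exp c, - b * exp (- c), - c) in
  let S := sqrt ((a ^ 2 + 1) * exp (2 * c) - 2 * exp c + 1) in
  let eps := if Rlt_dec 0 a then -1 else 1 in
  cos alpha >
    exp c / S *
    ((2 - 4 * exp c + eps * a * S + exp (2 * c) * (2 * a ^ 2 + 2 + eps * a * S))
     / sqrt ((a ^ 2 + 1) * exp (6 * c)
             + exp (2 * c) * (a ^ 2 + 3 + 4 * eps * a * S)
             + exp (4 * c) * (6 * a ^ 2 + 3 + 4 * eps * a * S)
             - 2 * exp c - 4 * exp (3 * c) - 2 * exp (5 * c) + 1)) ->
  forall M : R, exists P : pt, isoptic alpha A1 A2 P /\ pz P > M.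
Proof.
  intros _ Hc Halpha A1 A2 S eps Hcos M.
  rewrite <- (view_cos_threshold a b c S eps Hc) in Hcos
    by (reflexivity || (unfold eps; destruct (Rlt_dec 0 a); ring)).
  set (x0 := (a * exp c + eps * S) / (exp c - 1)) in Hcos.
  set (x1 := a * exp c / (exp c - 1)).
  assert (Hhigh0 : cos alpha < view_cos a b c x1 0)
    by (rewrite view_cos_0_parallel by exact Hc; rewrite <- cos_0; apply cos_decreasing_1; lra).
  assert (Hnear : Rbar_locally p_infty (fun z =>
    (((M < z /\ c < z) /\ - c < z) /\ view_cos a b c x0 (exp (- z)) < cos alpha)
    /\ cos alpha < view_cos a b c x1 (exp (- z)))).
  { repeat apply filter_and.
    - exists M; tauto.
    - exists c; tauto.
    - exists (- c); tauto.
    - apply (filterlim_open _ _ _ (view_cos_p_infty a b c x0) (open_lt _)); lra.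
    - apply (filterlim_open _ _ _ (view_cos_p_infty a b c x1) (open_gt _)); lra. }
  destruct (filter_ex _ Hnear) as [z [[[[HM Hz1] Hz2] Hlow] Hhigh]].
  destruct (view_cos_attains a b c x0 x1 z (cos alpha)) as [x Hx]; [lra..|].
  exists (x, 0, z); split; [apply isoptic_view; try lra; exact Hx | unfold pz; simpl; lra].
Qed.
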